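(* Let $\mathcal{K}=\langle\mathcal{T},\mathcal{A}\rangle$ be a Fuzzy Argumentative Knowledge Base (FAKB) and let $q(\vec x)$ be a fuzzy conjunctive query or a union of fuzzy conjunctive queries over $\mathcal{K}$. Then $$\mathit{fcert}(q(\vec x),\mathcal{K})=\mathit{fans}(\mathsf{ref}(q(\vec x),\mathcal{T}),\mathcal{A}).$$
   Context: Vocabulary: sets $\mathsf{N_C},\mathsf{N_R},\mathsf{N_I}$ of concept names, role names, individuals; argument identifiers $\mathsf{N_A}$; textual arguments $\mathsf{N_T}$; argument-feature roles $\mathsf{N_F}$; built-in concepts $\mathtt{Arg},\mathtt{TArg}$ and built-in roles $\mathtt{att},\mathtt{sup},\mathtt{textOf}$. Augmented sets: $\mathsf{N_I^+}=\mathsf{N_I}\cup\mathsf{N_A}\cup\mathsf{N_T}$, $\mathsf{N_C^+}=\mathsf{N_C}\cup\{\mathtt{Arg},\mathtt{TArg}\}$, $\mathsf{N_R^+}=\mathsf{N_R}\cup\mathsf{N_F}\cup\{\mathtt{att},\mathtt{sup},\mathtt{textOf}\}$. An FABox is a finite set of fuzzy assertions $\langle\mathtt{A}(a),v\rangle$, $\langle\mathtt{r}(a,b),v\rangle$ ($\mathtt{A}\in\mathsf{N_C^+}$, $\mathtt{r}\in\mathsf{N_R^+}$) where $v\in[0,1]$ if $\mathtt{A}=\mathtt{Arg}$ or $\mathtt{r}\in\{\mathtt{att},\mathtt{sup}\}$ and $v=1$ otherwise; it is consistent iff each argument has at most one degree, any two $\mathtt{att}/\mathtt{sup}$ assertions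 on the same pair coincide (same role, same degree) and both endpoints occur in $\mathtt{Arg}$ assertions, and $\mathtt{textOf}$ is a bijection between argument identifiers and textual arguments with $\langle\mathtt{textOf}(a_i,TA_i),1\rangle\in\mathcal{A}$ iff $\mathtt{Arg}(a_i)$ and $\langle\mathtt{TArg}(TA_i),1\rangle$ are in $\mathcal{A}$. A DL-Lite$_\mathcal{R}$ TBox is a finite set of inclusions $B\sqsubseteq C$ and $Q\sqsubseteq S$ with $B::=A\mid\exists Q$, $Q::=r\mid r^-$, $C::=B\mid\neg B$, $S::=Q\mid\neg Q$. An FAKB is a pair $\mathcal{K}=\langle\mathcal{T},\mathcal{A}\rangle$ where $\mathcal{A}$ is a consistent FABox and $\mathcal{T}$ is a DL-Lite$_\mathcal{R}$ TBox over $\mathsf{N_C^+},\mathsf{N_R^+}$ in which $\mathtt{Arg},\mathtt{TArg},\mathtt{att},\mathtt{sup},\mathtt{textOf}$ do not occur on the right-hand side of inclusions. A fuzzy interpretation $\mathcal{I}=(\Delta^\mathcal{I},\cdot^\mathcal{I})$ maps individuals to distinct elements of $\Delta^\mathcal{I}$ (unique names), each concept name to a function $\Delta^\mathcal{I}\to[0,1]$ and each role name to a function $\Delta^\mathcal{I}\times\Delta^\mathcal{I}\to[0,1]$, extended by $(\exists Q(a))^\mathcal{I}=\sup_{b}(Q(a,b))^\mathcal{I}$, $(\neg A(a))^\mathcal{I}=1-(A(a))^\mathcal{I}$, $(Q^-(a,b))^\mathcal{I}=(Q(b,a))^\mathcal{I}$, $(\neg Q(a,b))^\mathcal{I}=1-(Q(a,b))^\mathcal{I}$.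 $\mathcal{I}$ is a model of $\mathcal{K}$ if it satisfies every inclusion $G\sqsubseteq H$ (i.e. $(H(a))^\mathcal{I}\ge(G(a))^\mathcal{I}$ for all elements/pairs) and every assertion $\langle f,v\rangle\in\mathcal{A}$ (i.e. $f^\mathcal{I}\ge v$). A fuzzy conjunctive query (FCQ) is $q(\vec x)=\exists\vec y.\varphi(\vec x,\vec y)$ with $\varphi$ a conjunction of atoms $\mathtt{A}(t)$, $\mathtt{r}(t,t')$, $\mathtt{A}\in\mathsf{N_C^+}$, $\mathtt{r}\in\mathsf{N_R^+}$, terms variables or individuals of $\mathsf{N_I^+}$; a UFCQ is a disjunction of FCQs. Degrees of queries use Zadeh semantics: $\wedge$ is $\min$, $\vee$ is $\max$, $\neg$ is $1-\cdot$, existential quantification is $\sup$. Fuzzy certain answers: $\mathit{fcert}(q(\vec x),\mathcal{K})=\{\langle\vec t,\alpha\rangle\mid \alpha=\inf_{\mathcal{I}\models\mathcal{K}}(q(\vec t))^\mathcal{I},\ \alpha>0\}$. For an FABox $\mathcal{A}$, $\mathcal{I}_\mathcal{A}$ is the interpretation whose domain is the individuals of $\mathcal{A}$ and which assigns to each atom the degree it has in $\mathcal{A}$ (and $0$ if absent); $\mathit{ans}(q(\vec x),\mathcal{A})=\{\vec t\mid (q(\vec t))^{\mathcal{I}_\mathcal{A}}>0\}$ and $\mathit{fans}(q(\vec x),\mathcal{A})=\{\langle\vec t,\alpha\rangle\mid\vec t\in\mathit{ans}(q(\vec x),\mathcal{A}),\ \alpha=(q(\vec t))^{\mathcal{I}_\mathcal{A}}\}$.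 $\mathsf{ref}$ denotes the standard DL-Lite query-rewriting (perfect reformulation) algorithm: given a (U)CQ $q(\vec x)$ and a DL-Lite$_\mathcal{R}$ TBox $\mathcal{T}$, it returns a UCQ $\mathsf{ref}(q(\vec x),\mathcal{T})$ such that, for every crisp ABox $\mathcal{A}$ with $\langle\mathcal{T},\mathcal{A}\rangle$ consistent, the certain answers of $q$ over $\langle\mathcal{T},\mathcal{A}\rangle$ equal $\mathit{ans}(\mathsf{ref}(q(\vec x),\mathcal{T}),\mathcal{A})$. *)

From HB Require Import structures.
From mathcomp Require Import all_boot all_order all_algebra.
From mathcomp Require Import boolp classical_sets reals.
From Stdlib Require List.
Unset Strict Implicit. Unset Printing Implicit Defensive.
Import Order.TTheory GRing.Theory Num.Theory.
Local Open Scope ring_scope.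
Local Open Scope classical_set_scope.

(* Vocabulary.  N_C, N_R, N_F, N_I, N_A, N_T are countably infinite    *)
(* (indexed by nat); built-ins are separate constructors.              *)
Inductive cname : Type :=
| CN of nat | Arg | TArg.

Inductive rname : Type :=  (* N_R^+ = N_R ∪ N_F ∪ {att, sup, textOf} *)
| RN of nat | RF of nat | att | supp | textOf.

Inductive indiv : Type :=  (* N_I^+ = N_I ∪ N_A ∪ N_T *)
| II of nat | IA of nat | IT of nat.

Inductive fassert (R : realType) : Type :=
| CA of cname & indiv & R
| RA of rname & indiv & indiv & R.

Arguments CA {R}.
Arguments RA {R}.

Definition fabox (R : realType) := seq (fassert R).

Definition is_attsup (r : rname) : Prop := r = att \/ r = supp.

Definition assert_deg_ok {R : realType} (f : fassert R) : Prop :=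
  match f with
  | CA A _ v => if A is Arg then (0 <= v <= 1)%R : Prop else v = 1
  | RA r _ _ v =>
      match r with
      | att | supp => (0 <= v <= 1)%R : Prop
      | _ => v = 1
      end
  end.

Definition has_Arg {R : realType} (Ab : fabox R) (a : indiv) : Prop :=
  exists v, List.In (CA Arg a v) Ab.

Definition has_TArg {R : realType} (Ab : fabox R) (t : indiv) : Prop :=
  List.In (CA TArg t 1) Ab.

Definition fabox_consistent {R : realType} (Ab : fabox R) : Prop :=
  (forall a v v', List.In (CA Arg a v) Ab -> List.In (CA Arg a v') Ab -> v = v') /\
  (forall r r' a b v v', is_attsup r -> is_attsup r' ->
      List.In (RA r a b v) Ab -> List.In (RA r' a b v') Ab -> r = r' /\ v = v') /\
  (forall r a b v, is_attsup r -> List.In (RA r a b v) Ab ->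
      has_Arg Ab a /\ has_Arg Ab b) /\
  (forall a t v, List.In (RA textOf a t v) Ab ->
      v = 1 /\ has_Arg Ab a /\ has_TArg Ab t) /\
  (forall a, has_Arg Ab a ->
      exists t, List.In (RA textOf a t 1) Ab /\
        forall t', List.In (RA textOf a t' 1) Ab -> t' = t) /\
  (forall t, has_TArg Ab t ->
      exists a, List.In (RA textOf a t 1) Ab /\
        forall a', List.In (RA textOf a' t 1) Ab -> a' = a).

Inductive role : Type := RP of rname | RI of rname.
Inductive basic : Type := BA of cname | BE of role.

Inductive incl : Type :=
| CIpos of basic & basic
| CIneg of basic & basic
| RIpos of role & role
| RIneg of role & role.

Definition tbox := seq incl.

Definition builtin_role (r : rname) : Prop :=
  r = att \/ r = supp \/ r = textOf.
Definition role_builtin (Q : role) : Prop :=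
  match Q with RP r | RI r => builtin_role r end.
Definition basic_builtin (B : basic) : Prop :=
  match B with
  | BA A => A = Arg \/ A = TArg
  | BE Q => role_builtin Q
  end.

Definition incl_ok (I : incl) : Prop :=
  match I with
  | CIpos _ B | CIneg _ B => ~ basic_builtin B
  | RIpos _ Q | RIneg _ Q => ~ role_builtin Q
  end.

Definition is_FAKB {R : realType} (T : tbox) (Ab : fabox R) : Prop :=
  (forall I, List.In I T -> incl_ok I) /\
  (forall f, List.In f Ab -> assert_deg_ok f) /\
  fabox_consistent Ab.

Record finterp (R : realType) : Type := FInterp {
  dom : Type;
  iind : indiv -> dom;
  iconc : cname -> dom -> R;
  irole : rname -> dom -> dom -> R }.
Arguments dom {R} f : rename.
Arguments iind {R} f _ : rename.
Arguments iconc {R} f _ _ : rename.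
Arguments irole {R} f _ _ _ : rename.

Definition finterp_wf {R : realType} (I : finterp R) : Prop :=
  injective (iind I) /\
  (forall A d, 0 <= iconc I A d <= 1) /\
  (forall r d e, 0 <= irole I r d e <= 1).

Definition role_val {R : realType} (I : finterp R) (Q : role) (d e : dom I) : R :=
  match Q with RP r => irole I r d e | RI r => irole I r e d end.

Definition basic_val {R : realType} (I : finterp R) (B : basic) (d : dom I) : R :=
  match B with
  | BA A => iconc I A d
  | BE Q => sup [set role_val I Q d e | e in [set: dom I]]
  end.

Definition sat_incl {R : realType} (I : finterp R) (ax : incl) : Prop :=
  match ax with
  | CIpos B1 B2 => forall d, basic_val I B1 d <= basic_val I B2 d
  | CIneg B1 B2 => forall d, basic_val I B1 d <= 1 - basic_val I B2 d
  | RIpos Q1 Q2 => forall d e, role_val I Q1 d e <= role_val I Q2 d e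
  | RIneg Q1 Q2 => forall d e, role_val I Q1 d e <= 1 - role_val I Q2 d e
  end.

Definition sat_assert {R : realType} (I : finterp R) (f : fassert R) : Prop :=
  match f with
  | CA A a v => v <= iconc I A (iind I a)
  | RA r a b v => v <= irole I r (iind I a) (iind I b)
  end.

Definition is_model {R : realType} (T : tbox) (Ab : fabox R) (I : finterp R) : Prop :=
  finterp_wf I /\
  (forall ax, List.In ax T -> sat_incl I ax) /\
  (forall f, List.In f Ab -> sat_assert I f).

Definition satisfiable {R : realType} (T : tbox) (Ab : fabox R) : Prop :=
  exists I : finterp R, is_model T Ab I.

Inductive term : Type := TV of nat | TC of indiv.
Inductive atom : Type :=
| QA of cname & term
| QR of rname & term & term.

(* q(h) = ∃(other vars). body ; h = answer terms *)
Record cq : Type := CQ { head : seq term; body : seq atom }.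
Definition ucq := seq cq.

Definition occ_atom (x : nat) (g : atom) : Prop :=
  match g with
  | QA _ t => t = TV x
  | QR _ t1 t2 => t1 = TV x \/ t2 = TV x
  end.

Definition var_of (x : nat) (q : cq) : Prop :=
  List.In (TV x) (head q) \/ exists g, List.In g (body q) /\ occ_atom x g.

Definition cq_safe (q : cq) : Prop :=
  forall x, List.In (TV x) (head q) -> exists g, List.In g (body q) /\ occ_atom x g.

Definition ucq_safe (Q : ucq) : Prop := forall q, List.In q Q -> cq_safe q.

Definition term_val {R : realType} (I : finterp R) (s : nat -> dom I) (t : term) : dom I :=
  match t with TV x => s x | TC a => iind I a end.

Definition atom_val {R : realType} (I : finterp R) (s : nat -> dom I) (g : atom) : R :=
  match g with
  | QA A t => iconc I A (term_val I s t)
  | QR r t1 t2 => irole I r (term_val I s t1) (term_val I s t2)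
  end.

Definition conj_val {R : realType} (vals : seq R) : R :=
  foldr Num.min 1 vals.

Definition cq_deg {R : realType} (I : finterp R) (q : cq) (tup : seq indiv) : R :=
  sup ([set 0] `|` [set conj_val (map (atom_val I s) (body q)) |
        s in [set s : nat -> dom I |
               List.Forall2 (fun t a => term_val I s t = iind I a) (head q) tup]]).

Definition ucq_deg {R : realType} (I : finterp R) (Q : ucq) (tup : seq indiv) : R :=
  sup ([set 0] `|` [set cq_deg I q tup | q in [set q | List.In q Q]]).

Definition fcert {R : realType} (Q : ucq) (T : tbox) (Ab : fabox R)
  : set (seq indiv * R) :=
  [set p | p.2 = inf [set ucq_deg I Q p.1 | I in [set I : finterp R | is_model T Ab I]]
           /\ 0 < p.2].

Definition assert_indivs {R : realType} (f : fassert R) : seq indiv :=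
  match f with CA _ a _ => [:: a] | RA _ a b _ => [:: a; b] end.

(* individuals of A = domain of I_A *)
Definition adom {R : realType} (Ab : fabox R) (a : indiv) : Prop :=
  exists f, List.In f Ab /\ List.In a (assert_indivs f).

Definition term_ival (s : nat -> indiv) (t : term) : indiv :=
  match t with TV x => s x | TC a => a end.

Definition abox_atom_deg {R : realType} (Ab : fabox R) (s : nat -> indiv) (g : atom) : R :=
  match g with
  | QA A t => sup ([set 0] `|` [set v | List.In (CA A (term_ival s t) v) Ab])
  | QR r t1 t2 =>
      sup ([set 0] `|` [set v | List.In (RA r (term_ival s t1) (term_ival s t2) v) Ab])
  end.

Definition abox_cq_deg {R : realType} (Ab : fabox R) (q : cq) (tup : seq indiv) : R :=
  sup ([set 0] `|` [set conj_val (map (abox_atom_deg Ab s) (body q)) |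
        s in [set s : nat -> indiv |
               (forall x, var_of x q -> adom Ab (s x)) /\
               List.Forall2 (fun t a => term_ival s t = a) (head q) tup]]).

(* a UCQ given as a (possibly infinite) set of CQs *)
Definition abox_ucq_deg {R : realType} (Ab : fabox R) (Q : set cq) (tup : seq indiv) : R :=
  sup ([set 0] `|` [set abox_cq_deg Ab q tup | q in Q]).

Definition ans {R : realType} (Q : set cq) (Ab : fabox R) : set (seq indiv) :=
  [set tup | 0 < abox_ucq_deg Ab Q tup].

Definition fans {R : realType} (Q : set cq) (Ab : fabox R) : set (seq indiv * R) :=
  [set p | ans Q Ab p.1 /\ p.2 = abox_ucq_deg Ab Q p.1].

(* PerfectRef (Calvanese et al.), as the closure of the input UCQ      *)
Definition unbound (q : cq) (x : nat) : Prop :=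
  ~ List.In (TV x) (head q) /\
  exists g, List.In g (body q) /\ occ_atom x g /\
    (forall g', List.In g' (body q) -> occ_atom x g' -> g' = g) /\
    (match g with QR _ t1 t2 => ~ (t1 = TV x /\ t2 = TV x) | _ => True end).

Definition fresh (q : cq) (x : nat) : Prop := ~ var_of x q.

Inductive gr (q : cq) : atom -> incl -> atom -> Prop :=
| gr_A1 A A1 t : gr q (QA A t) (CIpos (BA A1) (BA A)) (QA A1 t)
| gr_A2 A P t z : fresh q z -> gr q (QA A t) (CIpos (BE (RP P)) (BA A)) (QR P t (TV z))
| gr_A3 A P t z : fresh q z -> gr q (QA A t) (CIpos (BE (RI P)) (BA A)) (QR P (TV z) t)
| gr_E1 P t y A : unbound q y ->
    gr q (QR P t (TV y)) (CIpos (BA A) (BE (RP P))) (QA A t)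
| gr_E2 P t y P1 z : unbound q y -> fresh q z ->
    gr q (QR P t (TV y)) (CIpos (BE (RP P1)) (BE (RP P))) (QR P1 t (TV z))
| gr_E3 P t y P1 z : unbound q y -> fresh q z ->
    gr q (QR P t (TV y)) (CIpos (BE (RI P1)) (BE (RP P))) (QR P1 (TV z) t)
| gr_I1 P t y A : unbound q y ->
    gr q (QR P (TV y) t) (CIpos (BA A) (BE (RI P))) (QA A t)
| gr_I2 P t y P1 z : unbound q y -> fresh q z ->
    gr q (QR P (TV y) t) (CIpos (BE (RP P1)) (BE (RI P))) (QR P1 t (TV z))
| gr_I3 P t y P1 z : unbound q y -> fresh q z ->
    gr q (QR P (TV y) t) (CIpos (BE (RI P1)) (BE (RI P))) (QR P1 (TV z) t)
| gr_R1 P P1 t1 t2 : gr q (QR P t1 t2) (RIpos (RP P1) (RP P)) (QR P1 t1 t2)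
| gr_R2 P P1 t1 t2 : gr q (QR P t1 t2) (RIpos (RI P1) (RI P)) (QR P1 t1 t2)
| gr_R3 P P1 t1 t2 : gr q (QR P t1 t2) (RIpos (RI P1) (RP P)) (QR P1 t2 t1)
| gr_R4 P P1 t1 t2 : gr q (QR P t1 t2) (RIpos (RP P1) (RI P)) (QR P1 t2 t1).

Definition subst := nat -> term.
Definition subst_term (s : subst) (t : term) : term :=
  match t with TV x => s x | TC a => TC a end.
Definition subst_atom (s : subst) (g : atom) : atom :=
  match g with
  | QA A t => QA A (subst_term s t)
  | QR r t1 t2 => QR r (subst_term s t1) (subst_term s t2)
  end.

Definition unifier (s : subst) (g1 g2 : atom) : Prop :=
  subst_atom s g1 = subst_atom s g2.

Definition mgu (s : subst) (g1 g2 : atom) : Prop :=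
  unifier s g1 g2 /\
  forall th : subst, unifier th g1 g2 ->
    exists rho : subst, forall x, th x = subst_term rho (s x).

Inductive perfect_ref (T : tbox) (Q : ucq) : cq -> Prop :=
| pr_init q : List.In q Q -> perfect_ref T Q q
| pr_atom q g ax g' b' :
    perfect_ref T Q q -> List.In g (body q) -> List.In ax T -> gr q g ax g' ->
    (forall h, List.In h b' <-> ((List.In h (body q) /\ h <> g) \/ h = g')) ->
    perfect_ref T Q (CQ (head q) b')
| pr_reduce q g1 g2 s b' :
    perfect_ref T Q q -> List.In g1 (body q) -> List.In g2 (body q) -> mgu s g1 g2 ->
    (forall h, List.In h b' <-> exists h0, List.In h0 (body q) /\ h = subst_atom s h0) ->
    perfect_ref T Q (CQ (map (subst_term s) (head q)) b').

Definition ref (Q : ucq) (T : tbox) : set cq := [set q | perfect_ref T Q q].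

From Pilot Require Import Defs.
From HB Require Import structures.
From mathcomp Require Import all_boot all_order all_algebra.
From mathcomp Require Import boolp classical_sets reals.
From mathcomp Require Import lra.
Import Order.TTheory GRing.Theory Num.Theory.
Set Implicit Arguments. Unset Strict Implicit.
Local Open Scope ring_scope.
Local Open Scope classical_set_scope.

(* Soundness: every perfect-reformulation step, read in a model, can only lower the
   degree of a query, up to an arbitrarily small loss when an unbound variable is sent
   to an almost optimal existential witness; and evaluating over the FABox is a lower
   bound for evaluating in any model.
   Completeness: the fuzzy chase of the FABox is a model; its negative inclusions hold
   because the chase maps into any model of the (satisfiable) FAKB losing at most
   [eps] per derivation step.  So it suffices to bound the degree in the chase by the
   value [beta] of [fans].  Given a match of a reformulation in the chase with every
   atom above [beta], take the atom whose minimal derivation is deepest and undo its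
   last chase step: backwards along an inclusion (a rewriting step), or, when that step
   created an anonymous element shared by two atoms, by unifying them (a reduction
   step).  This decreases the sum of the minimal depths, or keeps it and decreases the
   number of atoms; at depth 0 all atoms are FABox assertions, so some reformulation
   has an FABox answer above [beta], which is absurd. *)

Section SupZero.
Variable R : realType.
Implicit Types (E : set R) (x c : R).

Lemma sup0U_ge0 E : (forall y, E y -> y <= 1) -> 0 <= sup ([set 0] `|` E).
Proof.
move=> E1; apply: ub_le_sup; last by left.
by exists 1 => y [->|/E1].
Qed.

Lemma le_sup0U E x : (forall y, E y -> y <= 1) -> E x -> x <= sup ([set 0] `|` E).
Proof.
move=> E1 Ex; apply: ub_le_sup; last by right.
by exists 1 => y [->|/E1].
Qed.

Lemma sup0U_le E c : 0 <= c -> (forall y, E y -> y <= c) -> sup ([set 0] `|` E) <= c.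
Proof. by move=> c0 Ec; apply: ge_sup; [exists 0; left|move=> y [->|/Ec]]. Qed.

Lemma sup0U_gt E x : 0 <= x -> x < sup ([set 0] `|` E) -> exists2 y, E y & x < y.
Proof.
move=> x0 /sup_gt [|y [->|Ey] xy]; [by exists 0; left| |by exists y].
by move: (lt_le_trans xy x0); rewrite ltxx.
Qed.

Lemma ler_eps_natr (n : nat) x c :
  (forall eps : R, 0 < eps -> x <= c + n%:R * eps) -> x <= c.
Proof.
move=> h; apply/ler_addgt0Pr => e e0.
have /h : 0 < e / n.+1%:R by rewrite divr_gt0.
move/le_trans; apply; rewrite lerD2l mulrCA ger_pMr // ler_pdivrMr // mul1r.
by rewrite ler_nat.
Qed.

Lemma inf_attained E x : E x -> lbound E x -> inf E = x.
Proof.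
move=> Ex Elb; apply/eqP; rewrite eq_le lb_le_inf ?andbT //; last by exists x.
by apply: ge_inf Ex; exists x.
Qed.

End SupZero.

Lemma InP (X : eqType) (x : X) (s : seq X) : reflect (List.In x s) (x \in s).
Proof.
elim: s => [|y s IH] /=; first by constructor.
rewrite in_cons; apply: (iffP orP) => [[/eqP->|/IH]|[->|/IH]]; by [left|right|rewrite eqxx].
Qed.

Lemma In_le_sumn (A : Type) (f : A -> nat) (a : A) (l : seq A) :
  List.In a l -> (f a <= sumn (map f l))%N.
Proof.
elim: l => //= b l IH [<-|/IH]; first exact: leq_addr.
by move/leq_trans; apply; rewrite leq_addl.
Qed.

Lemma Forall2_impl_in (A B : Type) (P P' : A -> B -> Prop) l1 l2 :
  (forall a b, List.In a l1 -> P a b -> P' a b) ->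
  List.Forall2 P l1 l2 -> List.Forall2 P' l1 l2.
Proof.
move=> PP' h; elim: h PP' => [|a b l1' l2' pab _ IH] PP'; constructor.
  by apply: PP' => //; left.
by apply: IH => a' b' ha; apply: PP'; right.
Qed.

Lemma Forall2_map_l (A A' B : Type) (f : A -> A') (P : A' -> B -> Prop) l1 l2 :
  List.Forall2 P (map f l1) l2 <-> List.Forall2 (fun a b => P (f a) b) l1 l2.
Proof.
split; last by elim=> [|a b l1' l2' h _ IH] /=; constructor.
elim: l1 l2 => [|a l1 IH] [|b l2] h; inversion h; subst; constructor => //.
exact: IH.
Qed.

Lemma Forall2_In_l (A B : Type) (P : A -> B -> Prop) l1 l2 a :
  List.Forall2 P l1 l2 -> List.In a l1 -> exists b, P a b.
Proof. by elim=> // a' b l1' l2' ab _ IH [<-|/IH]; [exists b|]. Qed.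

Lemma sumn_filter_le (X : Type) (f : X -> nat) (p : pred X) (l : seq X) :
  (sumn (map f (filter p l)) <= sumn (map f l))%N.
Proof. by rewrite !sumnE !big_map big_filter big_mkcond leq_sum // => y _; case: (p y). Qed.

Lemma sumn_filter_neq (X : eqType) (f : X -> nat) (x : X) (l : seq X) : x \in l ->
  (sumn (map f [seq y <- l | y != x]) + f x <= sumn (map f l))%N.
Proof.
elim: l => //= y l IH; rewrite in_cons; case: (eqVneq x y) => [<-|xy] /= xl.
  by rewrite addnC leq_add2l sumn_filter_le.
by rewrite -addnA leq_add2l IH.
Qed.

Lemma size_undup_map_lt (X Y : eqType) (f : X -> Y) (x y : X) (l : seq X) :
  x \in l -> y \in l -> x != y -> f x = f y ->
  (size (undup (map f l)) < size (undup l))%N.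
Proof.
move=> xl yl xy fxy.
have sub : {subset undup (map f l) <= map f (rem x (undup l))}.
  move=> w; rewrite mem_undup => /mapP [z zl ->].
  have [->|zx] := eqVneq z x; rewrite ?fxy map_f //.
    by rewrite (mem_rem_uniq _ (undup_uniq l)) inE eq_sym xy mem_undup.
  by rewrite (mem_rem_uniq _ (undup_uniq l)) inE zx mem_undup.
apply: leq_ltn_trans (uniq_leq_size (undup_uniq _) sub) _.
rewrite size_map size_rem ?mem_undup // prednK //.
by rewrite -has_predT; apply/hasP; exists x; rewrite ?mem_undup.
Qed.

Lemma exists_argmax_seq (X : eqType) (f : X -> nat) (l : seq X) : l != [::] ->
  exists2 x, x \in l & forall y, y \in l -> (f y <= f x)%N.
Proof.
elim: l => // y [|z l] IH _.
  by exists y => [|w]; rewrite ?inE // => /eqP->.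
have [x xl xmax] := IH isT; have [fyx|fxy] := leqP (f y) (f x).
  by exists x => [|w]; rewrite in_cons ?xl ?orbT // => /predU1P [->|/xmax].
exists y => [|w]; first by rewrite in_cons eqxx.
by rewrite in_cons => /predU1P [->//|/xmax/leq_trans]; apply; apply: ltnW.
Qed.

Section ConjVal.
Variables (R : realType) (A : Type) (f : A -> R).

Lemma le_conj_val (b : seq A) x :
  x <= conj_val (map f b) <-> x <= 1 /\ forall g, List.In g b -> x <= f g.
Proof.
elim: b => [|g b IH] /=; first by split=> [->|[]].
rewrite /conj_val /= le_min -/(conj_val _); split.
  by move=> /andP[h1 /IH [h2 h3]]; split=> // g' [<-|/h3].
move=> [h1 h2]; apply/andP; split; first by apply: h2; left.
by apply/IH; split=> // g' hg; apply: h2; right.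
Qed.

Lemma lt_conj_val (b : seq A) x :
  x < conj_val (map f b) <-> x < 1 /\ forall g, List.In g b -> x < f g.
Proof.
elim: b => [|g b IH] /=; first by split=> [->|[]].
rewrite /conj_val /= lt_min -/(conj_val _); split.
  by move=> /andP[h1 /IH [h2 h3]]; split=> // g' [<-|/h3].
move=> [h1 h2]; apply/andP; split; first by apply: h2; left.
by apply/IH; split=> // g' hg; apply: h2; right.
Qed.

Lemma conj_val_le1 (b : seq A) : conj_val (map f b) <= 1.
Proof. by case: (proj1 (le_conj_val b _) (lexx _)). Qed.

Lemma conj_val_ge (b : seq A) x :
  x <= conj_val (map f b) -> forall g, List.In g b -> x <= f g.
Proof. by case/le_conj_val. Qed.

End ConjVal.

Lemma le_conj_val_map (R : realType) (A : Type) (f f' : A -> R) (b : seq A) :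
  (forall g, List.In g b -> f g <= f' g) -> conj_val (map f b) <= conj_val (map f' b).
Proof.
move=> ff'; apply/le_conj_val; split=> [|g gb]; first exact: conj_val_le1.
exact: le_trans (conj_val_ge (lexx _) gb) (ff' g gb).
Qed.

Definition upd (D : Type) (s : nat -> D) (z : nat) (e : D) : nat -> D :=
  fun x => if x == z then e else s x.

Lemma upd_eq (D : Type) (s : nat -> D) z e : upd s z e z = e.
Proof. by rewrite /upd eqxx. Qed.

Lemma upd_neq (D : Type) (s : nat -> D) z e x : x <> z -> upd s z e x = s x.
Proof. by rewrite /upd => /eqP/negbTE->. Qed.

Lemma upd_fresh (D : Type) q (s : nat -> D) z e : fresh q z ->
  forall x, var_of x q -> upd s z e x = s x.
Proof. by move=> fr x xq; apply: upd_neq => exz; subst. Qed.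

Definition atom_eq_dec (g h : atom) : {g = h} + {g <> h}.
Proof. by do !decide equality. Defined.

Definition atom_eqb (g h : atom) : bool := if atom_eq_dec g h then true else false.

Lemma atom_eqP : Equality.axiom atom_eqb.
Proof. by move=> g h; rewrite /atom_eqb; case: atom_eq_dec => gh; constructor. Qed.

HB.instance Definition _ := hasDecEq.Build atom atom_eqP.

Definition ratom (Q : role) (t u : term) : atom :=
  match Q with RP P => QR P t u | RI P => QR P u t end.

Definition batom (B : basic) (t : term) (z : nat) : atom :=
  match B with BA A => QA A t | BE Q => ratom Q t (TV z) end.

Lemma ratom_inj Q t u t' u' : ratom Q t u = ratom Q t' u' -> t = t' /\ u = u'.
Proof. by case: Q => P /= [-> ->]. Qed.

Lemma occ_ratom x Q t u : occ_atom x (ratom Q t u) <-> t = TV x \/ u = TV x.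
Proof. by case: Q => P /=; last rewrite or_comm. Qed.

Lemma subst_ratom s Q t u :
  subst_atom s (ratom Q t u) = ratom Q (subst_term s t) (subst_term s u).
Proof. by case: Q. Qed.

(* The thirteen cases of [gr], grouped by the form of the inclusion; [batom B t z]
   reads [B(t)], with [z] the variable of the existential when [B = BE Q]. *)
Inductive rewrites (q : cq) : atom -> incl -> atom -> Prop :=
| rw_concept A B t z : fresh q z ->
    rewrites q (QA A t) (CIpos B (BA A)) (batom B t z)
| rw_exists Q B t y z : unbound q y -> fresh q z ->
    rewrites q (ratom Q t (TV y)) (CIpos B (BE Q)) (batom B t z)
| rw_role Q1 Q2 t u :
    rewrites q (ratom Q2 t u) (RIpos Q1 Q2) (ratom Q1 t u).

Definition term_size (t : term) : nat := if t is TV x then x.+1 else 0.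

Definition atom_size (g : atom) : nat :=
  match g with QA _ t => term_size t | QR _ t u => term_size t + term_size u end.

Lemma exists_fresh q : exists z, fresh q z.
Proof.
exists (sumn (map term_size (Defs.head q)) + sumn (map atom_size (body q)))%N.
case=> [/(In_le_sumn term_size)|[g [/(In_le_sumn atom_size) gq xg]]] /=.
  by rewrite ltnNge leq_addr.
have : (sumn (map term_size (Defs.head q)) + sumn (map atom_size (body q)) < atom_size g)%N.
  by case: g xg {gq} => [A t|r t u] /= => [->|[->|->]]; rewrite /= ?ltnS ?leq_addr ?leq_addl.
by rewrite ltnNge (leq_trans gq) ?leq_addl.
Qed.

Lemma gr_rewrites q g ax g' : gr q g ax g' -> rewrites q g ax g'.
Proof.
have [z fr] := exists_fresh q.
case=> {g ax g'}.
- by move=> A A1 t; apply: (@rw_concept q A (BA A1) t z).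
- by move=> A P t z'; apply: (@rw_concept q A (BE (RP P)) t z').
- by move=> A P t z'; apply: (@rw_concept q A (BE (RI P)) t z').
- by move=> P t y A ub; apply: (@rw_exists q (RP P) (BA A) t y z).
- by move=> P t y P1 z' ub; apply: (@rw_exists q (RP P) (BE (RP P1)) t y z').
- by move=> P t y P1 z' ub; apply: (@rw_exists q (RP P) (BE (RI P1)) t y z').
- by move=> P t y A ub; apply: (@rw_exists q (RI P) (BA A) t y z).
- by move=> P t y P1 z' ub; apply: (@rw_exists q (RI P) (BE (RP P1)) t y z').
- by move=> P t y P1 z' ub; apply: (@rw_exists q (RI P) (BE (RI P1)) t y z').
- by move=> P P1 t u; apply: (@rw_role q (RP P1) (RP P) t u).
- by move=> P P1 t u; apply: (@rw_role q (RI P1) (RI P) u t).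
- by move=> P P1 t u; apply: (@rw_role q (RI P1) (RP P) t u).
- by move=> P P1 t u; apply: (@rw_role q (RP P1) (RI P) u t).
Qed.

Lemma rewrites_gr q g ax g' : rewrites q g ax g' -> gr q g ax g'.
Proof.
case=> {g ax g'}.
- by move=> A [A1|[P|P]] t z fr; constructor.
- by move=> [P|P] [A1|[P1|P1]] t y z ub fr; constructor.
- by move=> [P1|P1] [P|P] t u; constructor.
Qed.

Lemma occ_batom x B z : occ_atom x (batom B (TV x) z).
Proof. by case: B => [A|Q] //=; apply/occ_ratom; left. Qed.

Lemma rewrites_head q g ax g' x : rewrites q g ax g' ->
  List.In (TV x) (Defs.head q) -> occ_atom x g -> occ_atom x g'.
Proof.
case=> {g ax g'} [A B t z _|Q B t y z [y_head _] _|Q1 Q2 t u] xq.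
- by move=> /= ->; apply: occ_batom.
- by case/occ_ratom => [->|[exy]]; [apply: occ_batom|subst].
- by move/occ_ratom => txu; apply/occ_ratom.
Qed.

Lemma occ_subst x0 x sg h : occ_atom x0 h -> sg x0 = TV x -> occ_atom x (subst_atom sg h).
Proof. by case: h => [A t|r t u] /= => [->|[->|->]] /= ->; [|left|right]. Qed.

Lemma ref_safe T Q q : ucq_safe Q -> perfect_ref T Q q -> cq_safe q.
Proof.
move=> Q_safe; elim=> {q} [q /Q_safe //|q g ax g' b' _ IH gq _ rw b'E
  |q g1 g2 sg b' _ IH _ _ _ b'E] x /=.
- move=> xq; have [h [hq xh]] := IH x xq.
  have [ehg|hg] := pselect (h = g).
    subst h; exists g'; split; first by apply/b'E; right.
    exact: rewrites_head (gr_rewrites rw) xq xh.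
  by exists h; split=> //; apply/b'E; left.
- case/List.in_map_iff => -[x0|a] [//= sgx0 x0q].
  have [h [hq x0h]] := IH x0 x0q.
  by exists (subst_atom sg h); split; [apply/b'E; exists h|apply: occ_subst x0h sgx0].
Qed.

Lemma fresh_not_occ q z g : fresh q z -> List.In g (body q) -> ~ occ_atom z g.
Proof. by move=> fr gq zg; apply: fr; right; exists g. Qed.

Definition sub1 (x : nat) (t : term) : subst := fun z => if z == x then t else TV z.

Lemma subst_sub1_id x t u : u <> TV x -> subst_term (sub1 x t) u = u.
Proof. by case: u => [z|a] //= zx; rewrite /sub1; case: eqP => // ezx; subst. Qed.

Lemma mgu_sub1_ratom Q x t b : t <> TV x -> b <> TV x ->
  mgu (sub1 x t) (ratom Q (TV x) b) (ratom Q t b).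
Proof.
move=> tx bx; split.
  by rewrite /unifier !subst_ratom (@subst_sub1_id x t t tx) /= /sub1 eqxx.
move=> th; rewrite /unifier !subst_ratom => /ratom_inj [thx _].
by exists th => z; rewrite /sub1; case: eqP => [->|].
Qed.

Section Soundness.
Variable R : realType.
Implicit Types (I : finterp R) (q : cq) (tup : seq indiv).

Lemma role_val_bnd I Q d e : finterp_wf I -> 0 <= role_val I Q d e <= 1.
Proof. by move=> [_ [_ hr]]; case: Q => r /=. Qed.

Lemma has_sup_role_val I Q d : finterp_wf I ->
  has_sup [set role_val I Q d e | e in [set: dom I]].
Proof.
move=> wf; split; first by exists (role_val I Q d d), d.
by exists 1 => _ [e _ <-]; case/andP: (role_val_bnd Q d e wf).
Qed.

Lemma role_val_le_basic I Q d e : finterp_wf I -> role_val I Q d e <= basic_val I (BE Q) d.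
Proof. by move=> wf; apply: ub_le_sup; [case: (has_sup_role_val Q d wf)|exists e]. Qed.

Lemma basic_val_witness I Q d eps : finterp_wf I -> 0 < eps ->
  exists e, basic_val I (BE Q) d - eps < role_val I Q d e.
Proof.
by move=> wf /sup_adherent /(_ (has_sup_role_val Q d wf)) [_ [e _ <-]]; exists e.
Qed.

Lemma basic_val_bnd I B d : finterp_wf I -> 0 <= basic_val I B d <= 1.
Proof.
move=> wf; case: B => [A|Q] /=; first by case: wf => _ [/(_ A d)].
have [e0 e1] := andP (role_val_bnd Q d d wf).
rewrite (le_trans e0 (role_val_le_basic Q d d wf)) /=.
apply: ge_sup => [|_ [e _ <-]]; first by exists (role_val I Q d d), d.
by case/andP: (role_val_bnd Q d e wf).
Qed.

Lemma atom_val_ratom I s Q t u :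
  atom_val I s (ratom Q t u) = role_val I Q (term_val I s t) (term_val I s u).
Proof. by case: Q. Qed.

Lemma atom_val_batom I s B t z : finterp_wf I ->
  atom_val I s (batom B t z) <= basic_val I B (term_val I s t).
Proof. by move=> wf; case: B => [A|Q] //=; rewrite atom_val_ratom role_val_le_basic. Qed.

Lemma atom_val_eq I s s' g : (forall x, occ_atom x g -> s x = s' x) ->
  atom_val I s g = atom_val I s' g.
Proof. by case: g => [A [x|a]|r [x|a] [x'|a']] /= ss'; rewrite ?ss' //; by [left|right]. Qed.

Lemma cq_deg_le1 I q tup : cq_deg I q tup <= 1.
Proof. by apply: sup0U_le => // _ [s _ <-]; apply: conj_val_le1. Qed.

Lemma cq_deg_ge0 I q tup : 0 <= cq_deg I q tup.
Proof. by apply: sup0U_ge0 => _ [s _ <-]; apply: conj_val_le1. Qed.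

Lemma abox_cq_deg_le1 (Ab : fabox R) q tup : abox_cq_deg Ab q tup <= 1.
Proof. by apply: sup0U_le => // _ [s _ <-]; apply: conj_val_le1. Qed.

Lemma le_cq_deg I q tup s :
  List.Forall2 (fun t a => term_val I s t = iind I a) (Defs.head q) tup ->
  conj_val (map (atom_val I s) (body q)) <= cq_deg I q tup.
Proof. by move=> hs; apply: le_sup0U; [move=> _ [? _ <-]; apply: conj_val_le1|exists s]. Qed.

Lemma le_ucq_deg I Q q tup : List.In q Q -> cq_deg I q tup <= ucq_deg I Q tup.
Proof. by move=> qQ; apply: le_sup0U; [move=> _ [? _ <-]; apply: cq_deg_le1|exists q]. Qed.

Lemma term_val_upd I s y e t : t <> TV y -> term_val I (upd s y e) t = term_val I s t.
Proof. by case: t => //= x xy; rewrite upd_neq // => exy; subst. Qed.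

(* The only non-trivial case: [g] holds up to [eps] once its unbound variable is
   sent to an almost optimal existential witness. *)
Lemma rewrites_sound I q g ax g' s eps : finterp_wf I -> sat_incl I ax ->
  rewrites q g ax g' -> List.In g (body q) -> 0 < eps ->
  exists s', [/\ atom_val I s g' - eps <= atom_val I s' g,
    forall h, List.In h (body q) -> h <> g -> atom_val I s' h = atom_val I s h &
    forall t, List.In t (Defs.head q) -> term_val I s' t = term_val I s t].
Proof.
move=> wf + rw + e0; case: rw => {g ax g'}.
- move=> A B t z _ /= le_BA _; exists s; split => //.
  apply: le_trans _ (le_BA _); apply: le_trans _ (atom_val_batom s B t z wf).
  by rewrite gerBl ltW.
- move=> Q B t y z [y_head [g [_ [_ [uniq_g not_yy]]]]] _ /= le_BQ gq.
  have [e he] := basic_val_witness Q (term_val I s t) wf e0.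
  have yg : occ_atom y (ratom Q t (TV y)) by apply/occ_ratom; right.
  have ty : t <> TV y.
    move=> ety; subst t; move: not_yy; rewrite -(uniq_g _ gq) //.
    by case: (Q) => P /=; apply.
  exists (upd s y e); split.
  + rewrite atom_val_ratom /= upd_eq term_val_upd //.
    apply: ltW; apply: le_lt_trans he; rewrite lerD2r.
    exact: le_trans (atom_val_batom s B t z wf) (le_BQ _).
  + move=> h hq hg; apply: atom_val_eq => x xh; apply: upd_neq => exy; subst x.
    by apply: hg; rewrite (uniq_g _ hq xh) (uniq_g _ gq yg).
  + by move=> u uq; apply: term_val_upd => euy; subst u.
- move=> Q1 Q2 t u /= le_Q _; exists s; split => //.
  by rewrite !atom_val_ratom; apply: le_trans _ (le_Q _ _); rewrite gerBl ltW.
Qed.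

Lemma cq_deg_rewrite I q g ax g' b' tup : finterp_wf I -> sat_incl I ax ->
  List.In g (body q) -> rewrites q g ax g' ->
  (forall h, List.In h b' <-> (List.In h (body q) /\ h <> g) \/ h = g') ->
  cq_deg I (CQ (Defs.head q) b') tup <= cq_deg I q tup.
Proof.
move=> wf sat gq rw b'E; apply: sup0U_le; first exact: cq_deg_ge0.
move=> _ [s s_head <-] /=; apply/ler_addgt0Pr => eps e0; rewrite -lerBlDr.
have [s' [g's' other head]] := rewrites_sound s wf sat rw gq e0.
have conj_b' h : List.In h b' -> conj_val (map (atom_val I s) b') <= atom_val I s h.
  by move=> hb'; apply: (conj_val_ge (lexx _)).
have eps_le x : x - eps <= x by rewrite gerBl ltW.
apply: le_trans (le_cq_deg (s := s') _); last first.
  by apply: Forall2_impl_in s_head => t a tq /= <-; apply: head.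
apply/le_conj_val; split=> [|h hq]; first exact: le_trans (eps_le _) (conj_val_le1 _ _).
have [->|hg] := pselect (h = g).
  by apply: le_trans g's'; rewrite lerD2r conj_b' //; apply/b'E; right.
by rewrite other //; apply: le_trans (eps_le _) _; apply/conj_b'/b'E; left.
Qed.

Lemma term_val_subst I s sg t :
  term_val I s (subst_term sg t) = term_val I (fun z => term_val I s (sg z)) t.
Proof. by case: t. Qed.

Lemma atom_val_subst I s sg h :
  atom_val I s (subst_atom sg h) = atom_val I (fun z => term_val I s (sg z)) h.
Proof. by case: h => [A t|r t u] /=; rewrite ?term_val_subst. Qed.

Lemma cq_deg_subst I q sg b' tup :
  (forall h, List.In h b' <-> exists h0, List.In h0 (body q) /\ h = subst_atom sg h0) ->
  cq_deg I (CQ (map (subst_term sg) (Defs.head q)) b') tup <= cq_deg I q tup.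
Proof.
move=> b'E; apply: sup0U_le; first exact: cq_deg_ge0.
move=> _ [s s_head <-] /=.
apply: le_trans (le_cq_deg (s := fun z => term_val I s (sg z)) _); last first.
  by move/Forall2_map_l: s_head; apply: Forall2_impl_in => t a _; rewrite term_val_subst.
apply/le_conj_val; split=> [|h hq]; first exact: conj_val_le1.
by rewrite -atom_val_subst; apply: (conj_val_ge (lexx _)); apply/b'E; exists h.
Qed.

Lemma cq_deg_ref_le T Ab I Q q tup : is_model T Ab I -> perfect_ref T Q q ->
  cq_deg I q tup <= ucq_deg I Q tup.
Proof.
move=> [wf [satT _]].
elim=> {q} [q qQ|q g ax g' b' _ IH gq axT rw b'E|q g1 g2 sg b' _ IH _ _ _ b'E].
- exact: le_ucq_deg.
- by apply: le_trans IH; apply: cq_deg_rewrite (gr_rewrites rw) b'E => //; apply: satT.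
- by apply: le_trans IH; apply: cq_deg_subst.
Qed.

Lemma abox_cq_deg_le_model T Ab I q tup : is_model T Ab I ->
  abox_cq_deg Ab q tup <= cq_deg I q tup.
Proof.
move=> [wf [_ satA]]; apply: sup0U_le; first exact: cq_deg_ge0.
move=> _ [s [_ s_head] <-].
have tv t : term_val I (fun z => iind I (s z)) t = iind I (term_ival s t) by case: t.
apply: le_trans (le_cq_deg (s := fun z => iind I (s z)) _); last first.
  by apply: Forall2_impl_in s_head => t a _ <-.
apply: le_conj_val_map => -[A t|r t u] _ /=; rewrite ?tv.
  by apply: sup0U_le => [|v /satA //]; case: wf => _ [/(_ A (iind I (term_ival s t)))/andP[]].
apply: sup0U_le => [|v /satA //].
by case: wf => _ [_ /(_ r (iind I (term_ival s t)) (iind I (term_ival s u)))/andP[]].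
Qed.

Lemma abox_ucq_deg_ref_le T Ab I Q tup : is_model T Ab I ->
  abox_ucq_deg Ab (ref Q T) tup <= ucq_deg I Q tup.
Proof.
move=> hI; apply: sup0U_le => [|_ [q qref <-]].
  by apply: sup0U_ge0 => _ [q _ <-]; apply: cq_deg_le1.
exact: le_trans (abox_cq_deg_le_model q tup hI) (cq_deg_ref_le tup hI qref).
Qed.
End Soundness.

Inductive elt : Type := Named of indiv | Anon of elt & basic & role.
Inductive fact : Type := FC of cname & elt | FR of rname & elt & elt.

Definition rfact (Q : role) (d e : elt) : fact :=
  match Q with RP P => FR P d e | RI P => FR P e d end.

(* For a concept [B = BA A] the second element is irrelevant. *)
Definition bfact (B : basic) (d e : elt) : fact :=
  match B with BA A => FC A d | BE Q => rfact Q d e end.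

Definition fmentions (n : elt) (f : fact) : Prop :=
  match f with FC _ d => d = n | FR _ d e => d = n \/ e = n end.

Lemma mentions_rfact n Q d e : fmentions n (rfact Q d e) <-> d = n \/ e = n.
Proof. by case: Q => P /=; last rewrite or_comm. Qed.

Lemma mentions_bfact B d e : fmentions d (bfact B d e).
Proof. by case: B => [A|Q] //=; apply/mentions_rfact; left. Qed.

Fixpoint anon_depth (d : elt) : nat := if d is Anon d' _ _ then (anon_depth d').+1 else 0.

Lemma anon_neq d B Q : d <> Anon d B Q.
Proof. by move/(congr1 anon_depth)/eqP; rewrite /= -[X in X == _]addn0 -addn1 eqn_add2l. Qed.

Section Chase.
Variables (R : realType) (T : tbox) (Ab : fabox R).

(* [der k v f]: the fuzzy chase derives [f] with degree [v] in [k] steps;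
   [Anon d B Q] is the [Q]-successor of [d] created because [B] holds at [d]. *)
Inductive der : nat -> R -> fact -> Prop :=
| der_concept A a v : List.In (CA A a v) Ab -> der 0 v (FC A (Named a))
| der_role r a b v : List.In (RA r a b v) Ab -> der 0 v (FR r (Named a) (Named b))
| der_ci k v B A d e : List.In (CIpos B (BA A)) T ->
    der k v (bfact B d e) -> der k.+1 v (FC A d)
| der_ce k v B Q d e : List.In (CIpos B (BE Q)) T ->
    der k v (bfact B d e) -> der k.+1 v (rfact Q d (Anon d B Q))
| der_ri k v Q1 Q2 d e : List.In (RIpos Q1 Q2) T ->
    der k v (rfact Q1 d e) -> der k.+1 v (rfact Q2 d e).

Definition chase_deg (f : fact) : R := sup ([set 0] `|` [set v | exists k, der k v f]).

Definition chase : finterp R :=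
  @FInterp R elt Named (fun A d => chase_deg (FC A d)) (fun P d e => chase_deg (FR P d e)).

Lemma role_val_chase Q d e : role_val chase Q d e = chase_deg (rfact Q d e).
Proof. by case: Q. Qed.

Lemma der_bfact_pos k v B1 B2 d e : List.In (CIpos B1 B2) T ->
  der k v (bfact B1 d e) -> exists e', der k.+1 v (bfact B2 d e').
Proof.
case: B2 => [A|Q] B12 h; first by exists d; apply: der_ci B12 h.
by exists (Anon d B1 Q); apply: der_ce B12 h.
Qed.

Lemma der_succ k v f : der k.+1 v f ->
  [\/ exists B A d e,
        [/\ f = FC A d, List.In (CIpos B (BA A)) T & der k v (bfact B d e)],
      exists B Q d e,
        [/\ f = rfact Q d (Anon d B Q), List.In (CIpos B (BE Q)) T & der k v (bfact B d e)]
    | exists Q1 Q2 d e,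
        [/\ f = rfact Q2 d e, List.In (RIpos Q1 Q2) T & der k v (rfact Q1 d e)]].
Proof.
move=> h; inversion h; [apply: Or31; exists B, A, d, e|apply: Or32; exists B, Q, d, e
  |apply: Or33; exists Q1, Q2, d, e]; by split.
Qed.

Lemma der_anon j w f d B Q : der j w f -> fmentions (Anon d B Q) f ->
  exists i e, [/\ (i < j)%N, der i w (bfact B d e) & i.+1 = j -> f = rfact Q d (Anon d B Q)].
Proof.
have later k w' (P : Prop) : (exists i e, (i < k)%N /\ der i w' (bfact B d e)) ->
    exists i e, [/\ (i < k.+1)%N, der i w' (bfact B d e) & i.+1 = k.+1 -> P].
  case=> i [e [ik h]]; exists i, e; split=> [||[ei]]; [exact: ltnW|exact: h|].
  by subst; rewrite ltnn in ik.
elim=> {j w f} [A a v _|r a b v _ []|k v B' A d' e' _ _ IH|k v B' Q' d' e' _ hB IH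
  |k v Q1 Q2 d' e' _ _ IH] //=.
- move=> ed; apply: later; subst d'.
  by have [i [e [ik h _]]] := IH (mentions_bfact _ _ _); exists i, e.
- case/mentions_rfact => [ed|[<- <- <-]]; last by exists k, e'; split.
  apply: later; subst d'.
  by have [i [e [ik h _]]] := IH (mentions_bfact _ _ _); exists i, e.
- move=> /mentions_rfact/(mentions_rfact _ Q1) m; apply: later.
  by have [i [e [ik h _]]] := IH m; exists i, e.
Qed.

Hypothesis Ab_deg : forall f, List.In f Ab -> assert_deg_ok f.

Lemma der_le1 k v f : der k v f -> v <= 1.
Proof.
elim=> // [[n||] a v'|[n|n|||] a b v'] /Ab_deg /=; by [move=> ->|case/andP].
Qed.

Lemma le_chase_deg k v f : der k v f -> v <= chase_deg f.
Proof. by move=> h; apply: le_sup0U; [move=> y [? /der_le1]|exists k]. Qed.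

Lemma chase_deg_le f c : 0 <= c -> (forall k v, der k v f -> v <= c) -> chase_deg f <= c.
Proof. by move=> c0 h; apply: sup0U_le => // y [k /h]. Qed.

Lemma chase_wf : finterp_wf chase.
Proof.
have bnd f : 0 <= chase_deg f <= 1.
  rewrite chase_deg_le ?andbT //; last by move=> k v /der_le1.
  by apply: sup0U_ge0 => y [k /der_le1].
by split; [move=> a b []|split=> *; apply: bnd].
Qed.

Lemma le_chase_basic k v B d e : der k v (bfact B d e) -> v <= basic_val chase B d.
Proof.
case: B => [A|Q] /= /le_chase_deg //; rewrite -role_val_chase => /le_trans; apply.
exact: role_val_le_basic chase_wf.
Qed.

Lemma chase_basic_le B d c : 0 <= c ->
  (forall k v e, der k v (bfact B d e) -> v <= c) -> basic_val chase B d <= c.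
Proof.
case: B => [A|Q] /= c0 h; first by apply: chase_deg_le => // k v /(h k v d).
apply: ge_sup; first by exists (role_val chase Q d d), d.
by move=> _ [e _ <-]; rewrite role_val_chase; apply: chase_deg_le => // k v /h.
Qed.

Section ChaseIntoModel.
Variables (M : finterp R) (eps : R).
Hypotheses (M_wf : finterp_wf M) (M_T : forall ax, List.In ax T -> sat_incl M ax)
  (M_Ab : forall f, List.In f Ab -> sat_assert M f) (eps_gt0 : 0 < eps).

(* Each anonymous element goes to an [eps]-optimal witness of its existential. *)
Fixpoint chase_hom (d : elt) : dom M :=
  match d with
  | Named a => iind M a
  | Anon d _ Q => projT1 (cid (basic_val_witness Q (chase_hom d) M_wf eps_gt0))
  end.

Definition hom_deg (f : fact) : R :=
  match f with
  | FC A d => iconc M A (chase_hom d)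
  | FR P d e => irole M P (chase_hom d) (chase_hom e)
  end.

Lemma hom_deg_rfact Q d e : hom_deg (rfact Q d e) = role_val M Q (chase_hom d) (chase_hom e).
Proof. by case: Q. Qed.

Lemma hom_deg_bfact B d e : hom_deg (bfact B d e) <= basic_val M B (chase_hom d).
Proof. by case: B => [A|Q] //=; rewrite hom_deg_rfact role_val_le_basic. Qed.

Lemma der_hom k v f : der k v f -> v - k%:R * eps <= hom_deg f.
Proof.
have step j (a b : R) : a - j%:R * eps <= b -> a - j.+1%:R * eps <= b.
  by apply: le_trans; rewrite lerD2l lerN2 ler_pM2r // ler_nat.
elim=> {k v f} [A a v /M_Ab|r a b v /M_Ab|k v B A d e /M_T BA _ IH|k v B Q d e /M_T BQ _ IH
  |k v Q1 Q2 d e /M_T Q12 _ IH] /=; rewrite ?mul0r ?subr0 //.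
- by apply: step; apply: le_trans IH (le_trans (hom_deg_bfact _ _ _) (BA _)).
- rewrite hom_deg_rfact mulrSr mulrDl mul1r opprD addrA.
  have := projT2 (cid (basic_val_witness Q (chase_hom d) M_wf eps_gt0)).
  move/ltW; apply: le_trans; rewrite lerD2r.
  exact: le_trans IH (le_trans (hom_deg_bfact _ _ _) (BQ _)).
- by apply: step; apply: le_trans IH _; rewrite !hom_deg_rfact Q12.
Qed.

End ChaseIntoModel.

Hypothesis Ab_sat : satisfiable T Ab.

Lemma der_neg_basic k1 v1 k2 v2 B1 B2 d e1 e2 : List.In (CIneg B1 B2) T ->
  der k1 v1 (bfact B1 d e1) -> der k2 v2 (bfact B2 d e2) -> v1 <= 1 - v2.
Proof.
move=> B12 h1 h2; have [M [M_wf [M_T M_Ab]]] := Ab_sat.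
rewrite lerBrDr; apply: (@ler_eps_natr _ (k1 + k2)) => eps e0.
have le1 := le_trans (der_hom M_wf M_T M_Ab e0 h1) (hom_deg_bfact _ _ _ _ _).
have le2 := le_trans (der_hom M_wf M_T M_Ab e0 h2) (hom_deg_bfact _ _ _ _ _).
have := M_T _ B12 (chase_hom M_wf e0 d); rewrite natrD mulrDl.
move: le1 le2; set a1 := _ * eps; set a2 := _ * eps; lra.
Qed.

Lemma der_neg_role k1 v1 k2 v2 Q1 Q2 d e : List.In (RIneg Q1 Q2) T ->
  der k1 v1 (rfact Q1 d e) -> der k2 v2 (rfact Q2 d e) -> v1 <= 1 - v2.
Proof.
move=> Q12 h1 h2; have [M [M_wf [M_T M_Ab]]] := Ab_sat.
rewrite lerBrDr; apply: (@ler_eps_natr _ (k1 + k2)) => eps e0.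
have := der_hom M_wf M_T M_Ab e0 h1; have := der_hom M_wf M_T M_Ab e0 h2.
have := M_T _ Q12 (chase_hom M_wf e0 d) (chase_hom M_wf e0 e).
rewrite !hom_deg_rfact natrD mulrDl; set a1 := _ * eps; set a2 := _ * eps; lra.
Qed.

Lemma chase_model : is_model T Ab chase.
Proof.
have swap (x y : R) : (x <= 1 - y) = (y <= 1 - x) by rewrite !lerBrDr addrC.
have b0 B d : 0 <= basic_val chase B d by case/andP: (basic_val_bnd B d chase_wf).
have b1 B d : basic_val chase B d <= 1 by case/andP: (basic_val_bnd B d chase_wf).
have r0 Q d e : 0 <= role_val chase Q d e by case/andP: (role_val_bnd Q d e chase_wf).
have r1 Q d e : role_val chase Q d e <= 1 by case/andP: (role_val_bnd Q d e chase_wf).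
split; first exact: chase_wf.
split=> [[B1 B2|B1 B2|Q1 Q2|Q1 Q2] ax d /=|[A a v|r a b v] f /=].
- apply: chase_basic_le => // k v e /(der_bfact_pos ax) [e'].
  exact: le_chase_basic.
- apply: chase_basic_le => [|k1 v1 e1 h1]; first by rewrite subr_ge0.
  rewrite swap; apply: chase_basic_le => [|k2 v2 e2 h2].
    by rewrite subr_ge0 (der_le1 h1).
  by rewrite swap; apply: der_neg_basic ax h1 h2.
- move=> e; rewrite role_val_chase; apply: chase_deg_le => // k v h.
  by rewrite role_val_chase; apply: le_chase_deg (der_ri ax h).
- move=> e; rewrite role_val_chase.
  apply: chase_deg_le => [|k1 v1 h1]; first by rewrite subr_ge0.
  rewrite swap role_val_chase; apply: chase_deg_le => [|k2 v2 h2].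
    by rewrite subr_ge0 (der_le1 h1).
  by rewrite swap; apply: der_neg_role ax h1 h2.
- exact: le_chase_deg (der_concept f).
- exact: le_chase_deg (der_role f).
Qed.

End Chase.

Definition tval (s : nat -> elt) (t : term) : elt :=
  match t with TV x => s x | TC a => Named a end.

Definition fact_of (s : nat -> elt) (g : atom) : fact :=
  match g with
  | QA A t => FC A (tval s t)
  | QR r t u => FR r (tval s t) (tval s u)
  end.

Lemma fact_of_ratom s Q t u : fact_of s (ratom Q t u) = rfact Q (tval s t) (tval s u).
Proof. by case: Q. Qed.

Lemma fact_of_batom s B t z : fact_of s (batom B t z) = bfact B (tval s t) (s z).
Proof. by case: B => //= Q; rewrite fact_of_ratom. Qed.

Lemma tval_upd s z e t : t <> TV z -> tval (upd s z e) t = tval s t.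
Proof. by case: t => //= x xz; rewrite upd_neq // => exz; subst. Qed.

Lemma fact_of_rfact s g Q d e : fact_of s g = rfact Q d e ->
  exists t u, [/\ g = ratom Q t u, tval s t = d & tval s u = e].
Proof.
case: g => [A t|r t u]; first by case: Q.
by case: Q => P /= [-> <- <-]; [exists t, u|exists u, t].
Qed.

Lemma fact_of_eq s s' g : (forall x, occ_atom x g -> s x = s' x) ->
  fact_of s g = fact_of s' g.
Proof. by case: g => [A [x|a]|r [x|a] [x'|a']] /= ss'; rewrite ?ss' //; by [left|right]. Qed.

Lemma tval_subst s sg t : (forall z, tval s (sg z) = s z) ->
  tval s (subst_term sg t) = tval s t.
Proof. by case: t => //= z; apply. Qed.

Lemma fact_of_subst s sg h : (forall z, tval s (sg z) = s z) ->
  fact_of s (subst_atom sg h) = fact_of s h.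
Proof. by move=> ssg; case: h => [A t|r t u] /=; rewrite !tval_subst. Qed.

Lemma mentions_fact_of s x g : occ_atom x g -> fmentions (s x) (fact_of s g).
Proof. by case: g => [A t|r t u] /= => [->|[->|->]]; [|left|right]. Qed.

Lemma tval_sub1 s x t : tval s t = s x -> forall z, tval s (sub1 x t z) = s z.
Proof. by move=> tx z; rewrite /sub1; case: eqP => [->|]. Qed.

Section Completeness.
Variables (R : realType) (T : tbox) (Ab : fabox R) (Q : ucq) (tup : seq indiv) (beta : R).
Hypotheses (Ab_deg : forall f, List.In f Ab -> assert_deg_ok f) (Q_safe : ucq_safe Q)
  (beta_lt1 : beta < 1).
Local Notation der := (der T Ab).

Definition der_above (f : fact) (k : nat) : Prop := exists2 v, beta < v & der k v f.

Definition min_depth (f : fact) : nat :=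
  if pselect (exists k, `[< der_above f k >]) is left H then ex_minn H else 0.

Lemma min_depthP f k : der_above f k -> der_above f (min_depth f) /\ (min_depth f <= k)%N.
Proof.
move=> fk; rewrite /min_depth; case: pselect => [H|[]]; last by exists k; apply/asboolP.
by case: ex_minnP => m /asboolP fm mmin; split=> //; apply/mmin/asboolP.
Qed.

Definition embeds (q : cq) (s : nat -> elt) : Prop :=
  (forall g, List.In g (body q) -> exists k, der_above (fact_of s g) k) /\
  List.Forall2 (fun t a => tval s t = Named a) (Defs.head q) tup.

Definition depth_sum (q : cq) (s : nat -> elt) : nat :=
  sumn (map (fun g => min_depth (fact_of s g)) (body q)).

Definition atom_count (q : cq) : nat := size (undup (body q)).

Definition descends (q' : cq) (s' : nat -> elt) (q : cq) (s : nat -> elt) : Prop :=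
  (depth_sum q' s' < depth_sum q s)%N \/
  depth_sum q' s' = depth_sum q s /\ (atom_count q' < atom_count q)%N.

Definition has_descendant (q : cq) (s : nat -> elt) : Prop :=
  exists q' s', [/\ perfect_ref T Q q', embeds q' s' & descends q' s' q s].

Lemma rewrite_descends q s g ax g' s' k :
  perfect_ref T Q q -> embeds q s -> List.In g (body q) -> List.In ax T ->
  rewrites q g ax g' -> (forall x, var_of x q -> s' x = s x) ->
  der_above (fact_of s' g') k -> min_depth (fact_of s g) = k.+1 ->
  has_descendant q s.
Proof.
move=> qref [s_body s_head] gq axT rw s's g'k gdepth.
have s'_body h : List.In h (body q) -> fact_of s' h = fact_of s h.
  by move=> hq; apply: fact_of_eq => x xh; apply: s's; right; exists h.
exists (CQ (Defs.head q) (g' :: [seq h <- body q | h != g])), s'; split.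
- apply: pr_atom qref gq axT (rewrites_gr rw) _ => h /=.
  split=> [[<-|/InP]|[[hq hg]|<-]]; [by right| |right|by left].
    by rewrite mem_filter => /andP[/eqP hg /InP hq]; left.
  by apply/InP; rewrite mem_filter (introN eqP hg); apply/InP.
- split=> /= [h [<-|/InP]|]; first by exists k.
    by rewrite mem_filter => /andP[_ /InP hq]; rewrite s'_body //; apply: s_body.
  by apply: Forall2_impl_in s_head => -[x|a] b xq //= <-; apply: s's; left.
left; rewrite /depth_sum /=.
have -> : [seq min_depth (fact_of s' h) | h <- body q & h != g] =
          [seq min_depth (fact_of s h) | h <- body q & h != g].
  by apply/eq_in_map => h; rewrite mem_filter => /andP[_ /InP hq]; rewrite s'_body.
apply: leq_trans (sumn_filter_neq _ (introT (InP _ _) gq)).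
by rewrite addnC ltn_add2l gdepth ltnS (min_depthP g'k).2.
Qed.

Lemma reduce_descends q s g1 g2 sg :
  perfect_ref T Q q -> embeds q s -> List.In g1 (body q) -> List.In g2 (body q) ->
  g1 <> g2 -> mgu sg g1 g2 -> (forall z, tval s (sg z) = s z) ->
  has_descendant q s.
Proof.
move=> qref [s_body s_head] g1q g2q g12 sg_mgu ssg.
exists (CQ (map (subst_term sg) (Defs.head q)) (map (subst_atom sg) (body q))), s.
split; [|split=> /= [h /InP/mapP [h0 /InP h0q ->]|]|right; split].
- apply: pr_reduce qref g1q g2q sg_mgu _ => h.
  split=> [/InP/mapP [h0 /InP h0q ->]|[h0 [/InP h0q ->]]]; first by exists h0.
  by apply/InP/map_f.
- by rewrite fact_of_subst //; apply: s_body.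
- by apply/Forall2_map_l; apply: Forall2_impl_in s_head => t a _; rewrite tval_subst.
- by rewrite /depth_sum /= -map_comp; congr sumn; apply: eq_map => h /=; rewrite fact_of_subst.
- apply: size_undup_map_lt (introT (InP _ _) g1q) (introT (InP _ _) g2q) _ sg_mgu.1.
  exact/eqP.
Qed.

(* Anonymous elements are sent to an arbitrary individual; this never matters,
   since depth-0 facts only involve named elements. *)
Definition named (s : nat -> elt) (x : nat) : indiv := if s x is Named a then a else II 0.

Lemma tval_named s t a : tval s t = Named a -> term_ival (named s) t = a.
Proof. by case: t => [x|a'] /= sta; [rewrite /named sta|case: sta]. Qed.

Lemma der0_abox v f : der 0 v f ->
  (exists A a, f = FC A (Named a) /\ List.In (CA A a v) Ab) \/
  (exists r a b, f = FR r (Named a) (Named b) /\ List.In (RA r a b v) Ab).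
Proof. by move=> h; inversion h; [left; exists A, a|right; exists r, a, b]. Qed.

Lemma der0_atom s g v : der 0 v (fact_of s g) ->
  v <= abox_atom_deg Ab (named s) g /\
  forall x, occ_atom x g -> s x = Named (named s x) /\ adom Ab (named s x).
Proof.
case/der0_abox => [[A [a [gA Aa]]]|[r [a [b [gR ab]]]]].
- case: g gA => [A' t|r' t u] //= [-> ta]; split.
    by apply: le_sup0U; [move=> w /(der_concept T) /(der_le1 Ab_deg)|rewrite (tval_named ta)].
  move=> x xt; subst t; move: ta => /= sx; rewrite /named sx; split=> //.
  by exists (CA A a v); split=> //; left.
- case: g gR => [A' t|r' t u] //= [-> ta ub]; split.
    apply: le_sup0U; first by move=> w /(der_role T) /(der_le1 Ab_deg).
    by rewrite (tval_named ta) (tval_named ub).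
  move=> x [xt|xu]; subst; move: ta ub => /= ta ub; rewrite /named.
    by rewrite ta; split=> //; exists (RA r a b v); split=> //; left.
  by rewrite ub; split=> //; exists (RA r a b v); split=> //; right; left.
Qed.

Lemma embeds_depth0 q s : perfect_ref T Q q -> embeds q s ->
  (forall g, List.In g (body q) -> min_depth (fact_of s g) = 0%N) ->
  beta < abox_cq_deg Ab q tup.
Proof.
move=> qref [s_body s_head] depth0.
have atom0 g : List.In g (body q) -> der_above (fact_of s g) 0.
  by move=> gq; have [k /min_depthP [+ _]] := s_body g gq; rewrite depth0.
have adom_q x : var_of x q -> adom Ab (named s x).
  move=> xq; have [g [gq xg]] : exists g, List.In g (body q) /\ occ_atom x g.
    by case: xq => [/(ref_safe Q_safe qref)|].
  by have [v _ /der0_atom [_ /(_ x xg) []]] := atom0 g gq.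
apply: lt_le_trans (le_sup0U _ _); last first.
- exists (named s) => //; split=> //.
  by apply: Forall2_impl_in s_head => t a _; apply: tval_named.
- by move=> _ [sg _ <-]; apply: conj_val_le1.
apply/lt_conj_val; split=> // g gq.
by have [v bv /der0_atom [vg _]] := atom0 g gq; apply: lt_le_trans vg.
Qed.

(* Maximality of [g] forces any derivation of a fact mentioning the element created
   for [g] to end with the very step that created it. *)
Lemma anon_facts q s g B Q0 d : embeds q s -> List.In g (body q) ->
  (forall h, List.In h (body q) -> (min_depth (fact_of s h) <= min_depth (fact_of s g))%N) ->
  fact_of s g = rfact Q0 d (Anon d B Q0) -> List.In (CIpos B (BE Q0)) T ->
  forall h, List.In h (body q) -> fmentions (Anon d B Q0) (fact_of s h) ->
  fact_of s h = fact_of s g.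
Proof.
move=> [s_body _] gq gmax gfact BQ0 h hq hn.
have [k /min_depthP [[w bw hder] _]] := s_body h hq.
have [i [e [ih hi]]] := der_anon hder hn; rewrite gfact; apply.
have gi : (min_depth (fact_of s g) <= i.+1)%N.
  by apply: (min_depthP _).2; exists w => //; rewrite gfact; apply: der_ce BQ0 hi.
by apply/eqP; rewrite eqn_leq ih (leq_trans (gmax h hq) gi).
Qed.

Lemma shared_reduce q s Q0 t1 t2 b :
  perfect_ref T Q q -> embeds q s ->
  List.In (ratom Q0 t1 b) (body q) -> List.In (ratom Q0 t2 b) (body q) -> t1 <> t2 ->
  tval s t1 = tval s t2 -> tval s b <> tval s t1 -> has_descendant q s.
Proof.
move=> qref qs.
have var_case x t : List.In (ratom Q0 (TV x) b) (body q) -> List.In (ratom Q0 t b) (body q) ->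
    t <> TV x -> tval s t = s x -> b <> TV x -> has_descendant q s.
  move=> g1q g2q tx ts bx.
  apply: (reduce_descends (sg := sub1 x t)) g1q g2q _ _ (tval_sub1 ts) => //.
    by move/ratom_inj => [/esym].
  exact: mgu_sub1_ratom.
case: t1 => [x1|c1] g1q g2q t12 st12 sb.
  apply: var_case g1q g2q _ _ _ => [/esym //||bx]; first exact/esym.
  by apply: sb; rewrite bx.
case: t2 g2q t12 st12 => [x2|c2] g2q t12 /= st12; last by case: t12; case: st12 => ->.
by apply: var_case g2q g1q _ _ _ => // bx; apply: sb; rewrite bx /= st12.
Qed.

(* The variable holding the created element is either unbound, so that the existential
   rewriting step applies, or shared with another atom, which then has the same fact
   and unifies with [g]. *)
Lemma creation_descends q s g B Q0 d e k v :
  perfect_ref T Q q -> embeds q s -> List.In g (body q) ->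
  (forall h, List.In h (body q) -> (min_depth (fact_of s h) <= min_depth (fact_of s g))%N) ->
  min_depth (fact_of s g) = k.+1 -> fact_of s g = rfact Q0 d (Anon d B Q0) ->
  List.In (CIpos B (BE Q0)) T -> beta < v -> der k v (bfact B d e) ->
  has_descendant q s.
Proof.
move=> qref qs gq gmax gdepth gfact BQ0 bv hB.
have n_facts := anon_facts qs gq gmax gfact BQ0.
have dn : d <> Anon d B Q0 := @anon_neq d B Q0.
have [t [u [eg td un]]] := fact_of_rfact gfact; subst g.
have [y uy] : exists y, u = TV y by move: un; case: (u) => [y|a] //=; exists y.
subst u; move: un => /= sy.
have ty : t <> TV y by move=> ety; apply: dn; rewrite -{1}td ety.
have [[h [hq hg yh]]|no_h] :=
  pselect (exists h, [/\ List.In h (body q), h <> ratom Q0 t (TV y) & occ_atom y h]).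
  have : fact_of s h = rfact Q0 d (Anon d B Q0).
    by rewrite -gfact; apply: n_facts hq _; rewrite -sy; apply: mentions_fact_of.
  case/fact_of_rfact => t' [u' [eh t'd u'n]]; subst h.
  have u'y : u' = TV y.
    by case/occ_ratom: yh => // et'; case: dn; rewrite -{1}t'd et'.
  subst u'; apply: shared_reduce qref qs gq hq _ _ _.
  - by move=> ett'; apply: hg; rewrite ett'.
  - by rewrite td t'd.
  - by rewrite /= sy td => /esym.
have ub : unbound q y.
  split.
    by case/(Forall2_In_l qs.2) => a /=; rewrite sy.
  exists (ratom Q0 t (TV y)); split=> //; split; first by apply/occ_ratom; right.
  split; last by case: (Q0) => P /= [] //.
  by move=> h hq yh; apply: contrapT => hg; apply: no_h; exists h.
have [z fr] := exists_fresh q.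
have tz : t <> TV z by move=> etz; apply: fresh_not_occ fr gq _; apply/occ_ratom; left.
apply: (rewrite_descends qref qs gq BQ0 (rw_exists Q0 B t ub fr) (upd_fresh s e fr) _ gdepth).
by exists v; rewrite // fact_of_batom tval_upd // upd_eq td.
Qed.

Lemma embeds_descends q s g0 : perfect_ref T Q q -> embeds q s ->
  List.In g0 (body q) -> min_depth (fact_of s g0) <> 0%N -> has_descendant q s.
Proof.
move=> qref qs g0q g0pos.
have body_ne : body q != [::] by move: g0q; case: (body q).
have [g /InP gq gmax'] := exists_argmax_seq (fun h => min_depth (fact_of s h)) body_ne.
have {gmax'}gmax h :
    List.In h (body q) -> (min_depth (fact_of s h) <= min_depth (fact_of s g))%N.
  by move/InP; apply: gmax'.
have [k gdepth] : exists k, min_depth (fact_of s g) = k.+1.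
  move: (gmax g0 g0q); case: (min_depth (fact_of s g)) => [|k]; last by exists k.
  by rewrite leqn0 => /eqP /g0pos.
have [k' /min_depthP [[v bv hg] _]] := qs.1 g gq; rewrite gdepth in hg.
case/der_succ: hg => [[B [A [d [e [gf BA hB]]]]]|[B [Q0 [d [e [gf BQ hB]]]]]
  |[Q1 [Q2 [d [e [gf Q12 hQ]]]]]].
- case: g gq gmax gdepth gf => [A' t|r t u] gq gmax gdepth //= [eA td]; subst A'.
  have [z fr] := exists_fresh q.
  have tz : t <> TV z by move=> etz; apply: fresh_not_occ fr gq _; rewrite /= etz.
  apply: (rewrite_descends qref qs gq BA (rw_concept A B t fr) (upd_fresh s e fr) _ gdepth).
  by exists v; rewrite // fact_of_batom tval_upd // upd_eq td.
- exact: creation_descends qref qs gq gmax gdepth gf BQ bv hB.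
- have [t [u [eg td ue]]] := fact_of_rfact gf; subst g.
  apply: (rewrite_descends qref qs gq Q12 (rw_role q Q1 Q2 t u) (fun _ _ => erefl) _ gdepth).
  by exists v; rewrite // fact_of_ratom td ue.
Qed.

Lemma embeds_above q s : perfect_ref T Q q -> embeds q s ->
  exists2 q', perfect_ref T Q q' & beta < abox_cq_deg Ab q' tup.
Proof.
move: {2}(depth_sum q s) (erefl (depth_sum q s)) => m.
elim/ltn_ind: m q s => m IHm q s.
move: {2}(atom_count q) (erefl (atom_count q)) => N.
elim/ltn_ind: N q s => N IHN q s qN qm qref qs.
have [[g0 g0q g0pos]|depth0] :=
  pselect (exists2 g, List.In g (body q) & min_depth (fact_of s g) <> 0%N).
  have [q' [s' [q'ref q's [lt|[eq lt]]]]] := embeds_descends qref qs g0q g0pos.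
    by apply: (IHm (depth_sum q' s') _ q' s' erefl q'ref q's); rewrite -qm.
  by apply: (IHN (atom_count q') _ q' s' erefl _ q'ref q's); rewrite -?qN ?eq.
exists q => //; apply: embeds_depth0 qref qs _ => g gq.
by apply: contrapT => g0; apply: depth0; exists g.
Qed.

End Completeness.

Lemma term_val_chase (R : realType) (T : tbox) (Ab : fabox R) s t :
  term_val (chase T Ab) s t = tval s t.
Proof. by case: t. Qed.

Lemma atom_val_chase (R : realType) (T : tbox) (Ab : fabox R) s g :
  atom_val (chase T Ab) s g = chase_deg T Ab (fact_of s g).
Proof. by case: g => [A t|r t u] /=; rewrite !term_val_chase. Qed.

Lemma chase_ucq_deg_le (R : realType) (T : tbox) (Ab : fabox R) (Q : ucq) tup :
  (forall f, List.In f Ab -> assert_deg_ok f) -> ucq_safe Q ->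
  ucq_deg (chase T Ab) Q tup <= abox_ucq_deg Ab (ref Q T) tup.
Proof.
move=> Ab_deg Q_safe; set beta := abox_ucq_deg Ab (ref Q T) tup.
have beta0 : 0 <= beta by apply: sup0U_ge0 => _ [q _ <-]; apply: abox_cq_deg_le1.
rewrite leNgt; apply/negP => /(sup0U_gt beta0) [_ [q qQ <-]].
move=> /(sup0U_gt beta0) [_ [s s_head <-]] /lt_conj_val [beta1 s_above].
have qs : embeds T Ab tup beta q s.
  split; last by apply: Forall2_impl_in s_head => t a _; rewrite term_val_chase.
  move=> g gq; move: (s_above g gq); rewrite atom_val_chase.
  by case/(sup0U_gt beta0) => v [k hv] bv; exists k, v.
have [q' q'ref] := embeds_above Ab_deg Q_safe beta1 (pr_init T Q q qQ) qs.
apply/negP; rewrite -leNgt; apply: le_sup0U => [_ [q'' _ <-]|]; first exact: abox_cq_deg_le1.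
by exists q'.
Qed.

Unset Implicit Arguments.

Theorem proposition3 (R : realType) (T : tbox) (Ab : fabox R) (Q : ucq) :
  is_FAKB T Ab ->
  satisfiable T Ab ->
  ucq_safe Q ->
  fcert Q T Ab = fans (ref Q T) Ab.
Proof.
move=> [_ [Ab_deg _]] Ab_sat Q_safe.
have deg_eq tup : inf [set ucq_deg I Q tup | I in [set I : finterp R | is_model T Ab I]] =
    abox_ucq_deg Ab (ref Q T) tup.
  apply: inf_attained; last by move=> _ [I hI <-]; apply: abox_ucq_deg_ref_le.
  exists (chase T Ab); first exact: chase_model.
  apply/eqP; rewrite eq_le chase_ucq_deg_le //.
  exact: abox_ucq_deg_ref_le (chase_model Ab_deg Ab_sat).
apply/seteqP; split=> -[tup a]; rewrite /fcert /fans /ans /= deg_eq.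
  by case=> -> a0.
by case=> a0 ->.
Qed.
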